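(* Let $\sum_{i=1}^n\alpha_i\cdot\lambda x.\vec t_i\in\mathcal S$ be a unitary distribution of closed abstractions. Then it belongs to $[\![\sharp\mathbb B\Rightarrow\sharp\mathbb B]\!]$ if and only if it represents a unitary operator $F:\mathbb C^2\to\mathbb C^2$.
   Context: Calculus. Fix a countably infinite set of variables. Pure values: $v,w::=x\mid\lambda x.\vec{s}\mid *\mid (v_1,v_2)\mid \mathtt{inl}(v)\mid\mathtt{inr}(v)$. Pure terms: $s,t::=v\mid s\,t\mid t;\vec{s}\mid \mathtt{let}\,(x_1,x_2)=t\,\mathtt{in}\,\vec{s}\mid \mathtt{match}\,t\,\{\mathtt{inl}\,x_1\mapsto\vec{s}_1\mid\mathtt{inr}\,x_2\mapsto\vec{s}_2\}$. Term distributions: $\vec{t}::=\vec{0}\mid t\mid \vec{s}+\vec{t}\mid\alpha\cdot\vec{t}$ ($\alpha\in\mathbb{C}$); value distributions are built from pure values only. Top-level distributions are considered modulo the congruence $\equiv$ of weak vector spaces (commutative monoid axioms for $+,\vec 0$; $1\cdot\vec t\equiv\vec t$; $\alpha\cdot(\beta\cdot\vec t)\equiv\alpha\beta\cdot\vec t$; $(\alpha+\beta)\cdot\vec t\equiv\alpha\cdot\vec t+\beta\cdot\vec t$; $\alpha\cdot(\vec t_1+\vec t_2)\equiv\alpha\cdot\vec t_1+\alpha\cdot\vec t_2$), which does not act inside pure terms; $0\cdot t\not\equiv\vec 0$; each distribution has a unique canonical form $\sum_i\alpha_i t_i$ with distinct pure $t_i$. Constructs are extended by linearity (application is bilinear: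 $(\sum_k\gamma_k t_k)(\sum_l\delta_l s_l)=\sum_{k,l}\gamma_k\delta_l t_ks_l$; pairs bilinear; $\mathtt{inl},\mathtt{inr}$ linear; $\mathtt{let},\mathtt{match},;$ linear in their first argument). $\mathtt{tt}:=\mathtt{inl}( * )$, $\mathtt{ff}:=\mathtt{inr}( * )$. Bilinear substitution: $\vec t\langle x:=\vec w\rangle=\sum_j\beta_j\vec t[x:=w_j]$ for $\vec w=\sum_j\beta_jw_j$. Atomic evaluation $\triangleright$ is call-by-value ($\beta_v$: $(\lambda x.\vec t)v\triangleright\vec t[x:=v]$; $*;\vec s\triangleright\vec s$; let on pairs of values; match on $\mathtt{inl}(v)$/$\mathtt{inr}(v)$; congruence rules reducing the argument of an application first, then the function, and the scrutinee of $;$, let, match). $\vec t\succ\vec t'$ iff $\vec t\equiv\alpha\cdot s+\vec r$, $\vec t'\equiv\alpha\cdot\vec s'+\vec r$, $s\triangleright\vec s'$; $\succ^*$ is its reflexive-transitive closure. Semantics. For closed value distributions in canonical form, $\langle\sum_i\alpha_iv_i|\sum_j\beta_jw_j\rangle=\sum_{i,j}\overline{\alpha_i}\beta_j\delta_{v_i,w_j}$; $\mathcal S$ is the set of closed value distributions of norm $1$. $[\![\mathbb U]\!]=\{*\}$, $[\![A+B]\!]=\{\mathtt{inl}(\vec v):\vec v\in[\![A]\!]\}\cup\{\mathtt{inr}(\vec w):\vec w\in[\![B]\!]\}$, $[\![\sharp A]\!]=\mathrm{Span}([\![A]\!])\cap\mathcal S$, $\mathbb B=\mathbb U+\mathbb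 U$, and $[\![A\Rightarrow B]\!]=\{(\sum_{i=1}^n\alpha_i\cdot\lambda x.\vec t_i)\in\mathcal S:\forall\vec v\in[\![A]\!],\ (\sum_i\alpha_i\cdot\vec t_i\langle x:=\vec v\rangle)\Vdash B\}$, where $\vec t\Vdash A$ means $\vec t\succ^*\vec v$ for some $\vec v\in[\![A]\!]$. The Boolean projection $\pi_{\mathbb B}:\mathrm{Span}(\{\mathtt{tt},\mathtt{ff}\})\to\mathbb C^2$ sends $\alpha\cdot\mathtt{tt}\mapsto(\alpha,0)$, $\beta\cdot\mathtt{ff}\mapsto(0,\beta)$, $\alpha\cdot\mathtt{tt}+\beta\cdot\mathtt{ff}\mapsto(\alpha,\beta)$. A closed distribution $\vec t$ represents $F:\mathbb C^2\to\mathbb C^2$ if for all $\vec v\in\mathrm{Span}(\{\mathtt{tt},\mathtt{ff}\})$ there is $\vec w\in\mathrm{Span}(\{\mathtt{tt},\mathtt{ff}\})$ with $\vec t\,\vec v\succ^*\vec w$ and $\pi_{\mathbb B}(\vec w)=F(\pi_{\mathbb B}(\vec v))$. $F$ is unitary if it is linear and preserves the inner product of $\mathbb C^2$. *)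

From HB Require Import structures.
From mathcomp Require Import all_boot all_algebra.
From mathcomp Require Import boolp Rstruct complex.
Set Implicit Arguments.
Unset Strict Implicit.
Unset Printing Implicit Defensive.
Import GRing.Theory Num.Theory.
Local Open Scope ring_scope.

Definition C : numClosedFieldType := (Rdefinitions.R)[i].

(* Binders: Lam binds index 0 in its body; Let (x1,x2)=t in s binds    *)
(* x1 as index 1 and x2 as index 0 in s; each Match branch binds its   *)
(* variable as index 0.                                                *)
Inductive val : Type :=
  | Var  : nat -> val
  | Lam  : dist -> val
  | Star : val
  | Pair : val -> val -> val
  | Inl  : val -> val
  | Inr  : val -> val
with tm : Type :=
  | TVal  : val -> tm
  | App   : tm -> tm -> tm
  | Seq   : tm -> dist -> tm
  | Let   : tm -> dist -> tm
  | Match : tm -> dist -> dist -> tm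
with dist : Type :=
  | D0    : dist
  | DPure : tm -> dist
  | DPlus : dist -> dist -> dist
  | DScal : C -> dist -> dist.

Fixpoint liftv (k : nat) (v : val) : val :=
  match v with
  | Var n => if (k <= n)%N then Var n.+1 else Var n
  | Lam d => Lam (liftd k.+1 d)
  | Star => Star
  | Pair a b => Pair (liftv k a) (liftv k b)
  | Inl a => Inl (liftv k a)
  | Inr a => Inr (liftv k a)
  end
with liftt (k : nat) (t : tm) : tm :=
  match t with
  | TVal v => TVal (liftv k v)
  | App a b => App (liftt k a) (liftt k b)
  | Seq a s => Seq (liftt k a) (liftd k s)
  | Let a s => Let (liftt k a) (liftd k.+2 s)
  | Match a s1 s2 => Match (liftt k a) (liftd k.+1 s1) (liftd k.+1 s2)
  end
with liftd (k : nat) (d : dist) : dist :=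
  match d with
  | D0 => D0
  | DPure t => DPure (liftt k t)
  | DPlus a b => DPlus (liftd k a) (liftd k b)
  | DScal c a => DScal c (liftd k a)
  end.

Fixpoint substv (k : nat) (w : val) (v : val) : val :=
  match v with
  | Var n => if n == k then w else if (k < n)%N then Var n.-1 else Var n
  | Lam d => Lam (substd k.+1 (liftv 0 w) d)
  | Star => Star
  | Pair a b => Pair (substv k w a) (substv k w b)
  | Inl a => Inl (substv k w a)
  | Inr a => Inr (substv k w a)
  end
with substt (k : nat) (w : val) (t : tm) : tm :=
  match t with
  | TVal v => TVal (substv k w v)
  | App a b => App (substt k w a) (substt k w b)
  | Seq a s => Seq (substt k w a) (substd k w s)
  | Let a s => Let (substt k w a) (substd k.+2 (liftv 0 (liftv 0 w)) s)
  | Match a s1 s2 =>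
      Match (substt k w a) (substd k.+1 (liftv 0 w) s1) (substd k.+1 (liftv 0 w) s2)
  end
with substd (k : nat) (w : val) (d : dist) : dist :=
  match d with
  | D0 => D0
  | DPure t => DPure (substt k w t)
  | DPlus a b => DPlus (substd k w a) (substd k w b)
  | DScal c a => DScal c (substd k w a)
  end.

Fixpoint closedv (k : nat) (v : val) : bool :=
  match v with
  | Var n => (n < k)%N
  | Lam d => closedd k.+1 d
  | Star => true
  | Pair a b => closedv k a && closedv k b
  | Inl a => closedv k a
  | Inr a => closedv k a
  end
with closedt (k : nat) (t : tm) : bool :=
  match t with
  | TVal v => closedv k v
  | App a b => closedt k a && closedt k b
  | Seq a s => closedt k a && closedd k s
  | Let a s => closedt k a && closedd k.+2 s
  | Match a s1 s2 => [&& closedt k a, closedd k.+1 s1 & closedd k.+1 s2]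
  end
with closedd (k : nat) (d : dist) : bool :=
  match d with
  | D0 => true
  | DPure t => closedt k t
  | DPlus a b => closedd k a && closedd k b
  | DScal _ a => closedd k a
  end.

(* Distributions modulo the weak-vector-space congruence.              *)
(* The congruence does not act inside pure terms: pure terms are       *)
(* compared syntactically (Leibniz equality).                          *)

Fixpoint occ (d : dist) (t : tm) : Prop :=
  match d with
  | D0 => False
  | DPure s => s = t
  | DPlus a b => occ a t \/ occ b t
  | DScal _ a => occ a t
  end.

Fixpoint coef (d : dist) (t : tm) : C :=
  match d with
  | D0 => 0
  | DPure s => if `[< s = t >] then 1 else 0
  | DPlus a b => coef a t + coef b t
  | DScal c a => c * coef a t
  end.

(* d1 == d2 : same canonical form  sum_i alpha_i t_i  (same distinct
   pure terms t_i, same coefficients alpha_i, zero coefficients kept). *)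
Definition dequiv (d1 d2 : dist) : Prop :=
  forall t, (occ d1 t <-> occ d2 t) /\ coef d1 t = coef d2 t.

Definition dsum (s : seq dist) : dist := foldr DPlus D0 s.

Fixpoint lin (f : tm -> dist) (d : dist) : dist :=
  match d with
  | D0 => D0
  | DPure t => f t
  | DPlus a b => DPlus (lin f a) (lin f b)
  | DScal c a => DScal c (lin f a)
  end.

(* linear extension of a map on pure values (used only on value
   distributions; non-value pure terms are sent to 0) *)
Definition vlin (f : val -> dist) : dist -> dist :=
  lin (fun t => match t with TVal v => f v | _ => D0 end).

Definition dapp (d1 d2 : dist) : dist :=
  lin (fun t => lin (fun s => DPure (App t s)) d2) d1.

Definition dseq (d : dist) (s : dist) : dist := lin (fun t => DPure (Seq t s)) d.
Definition dlet (d : dist) (s : dist) : dist := lin (fun t => DPure (Let t s)) d.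
Definition dmatch (d : dist) (s1 s2 : dist) : dist :=
  lin (fun t => DPure (Match t s1 s2)) d.

Definition dinl (d : dist) : dist := vlin (fun v => DPure (TVal (Inl v))) d.
Definition dinr (d : dist) : dist := vlin (fun v => DPure (TVal (Inr v))) d.

Definition bsubst (body : dist) (w : dist) : dist :=
  vlin (fun v => substd 0 v body) w.

Inductive ared : tm -> dist -> Prop :=
  | ared_beta (body : dist) (v : val) :
      ared (App (TVal (Lam body)) (TVal v)) (substd 0 v body)
  | ared_seq (s : dist) : ared (Seq (TVal Star) s) s
  | ared_let (v1 v2 : val) (s : dist) :
      ared (Let (TVal (Pair v1 v2)) s) (substd 0 v1 (substd 0 (liftv 0 v2) s))
  | ared_inl (v : val) (s1 s2 : dist) :
      ared (Match (TVal (Inl v)) s1 s2) (substd 0 v s1)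
  | ared_inr (v : val) (s1 s2 : dist) :
      ared (Match (TVal (Inr v)) s1 s2) (substd 0 v s2)
  | ared_app_arg (s t : tm) (t' : dist) :
      ared t t' -> ared (App s t) (dapp (DPure s) t')
  | ared_app_fun (s : tm) (s' : dist) (v : val) :
      ared s s' -> ared (App s (TVal v)) (dapp s' (DPure (TVal v)))
  | ared_seq_ctx (t : tm) (t' : dist) (s : dist) :
      ared t t' -> ared (Seq t s) (dseq t' s)
  | ared_let_ctx (t : tm) (t' : dist) (s : dist) :
      ared t t' -> ared (Let t s) (dlet t' s)
  | ared_match_ctx (t : tm) (t' : dist) (s1 s2 : dist) :
      ared t t' -> ared (Match t s1 s2) (dmatch t' s1 s2).

Definition step (d d' : dist) : Prop :=
  exists (a : C) (s : tm) (s' r : dist),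
    dequiv d (DPlus (DScal a (DPure s)) r) /\
    dequiv d' (DPlus (DScal a s') r) /\ ared s s'.

Inductive steps : dist -> dist -> Prop :=
  | steps_refl d : steps d d
  | steps_step d1 d2 d3 : step d1 d2 -> steps d2 d3 -> steps d1 d3.

Definition is_val_tm (t : tm) : bool :=
  match t with TVal _ => true | _ => false end.

Definition valdist (d : dist) : Prop := forall t, occ d t -> is_val_tm t.

Fixpoint inner (d1 d2 : dist) : C :=
  match d1 with
  | D0 => 0
  | DPure s => coef d2 s
  | DPlus a b => inner a d2 + inner b d2
  | DScal c a => c^* * inner a d2
  end.

Definition inS (d : dist) : Prop :=
  valdist d /\ closedd 0 d /\ inner d d = 1.

Definition Span (X : dist -> Prop) (d : dist) : Prop :=
  exists l : seq (C * dist),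
    (forall p, List.In p l -> X p.2) /\
    dequiv d (dsum [seq DScal p.1 p.2 | p <- l]).

Inductive ty : Type :=
  | TU : ty
  | TSum : ty -> ty -> ty
  | TSharp : ty -> ty
  | TArrow : ty -> ty -> ty.

Definition TB : ty := TSum TU TU.

Definition lamsum (l : seq (C * dist)) : dist :=
  dsum [seq DScal p.1 (DPure (TVal (Lam p.2))) | p <- l].

Definition appsum (l : seq (C * dist)) (w : dist) : dist :=
  dsum [seq DScal p.1 (bsubst p.2 w) | p <- l].

Fixpoint interp (A : ty) (d : dist) : Prop :=
  match A with
  | TU => dequiv d (DPure (TVal Star))
  | TSum A1 A2 =>
      (exists v, interp A1 v /\ dequiv d (dinl v)) \/
      (exists w, interp A2 w /\ dequiv d (dinr w))
  | TSharp A1 => Span (interp A1) d /\ inS d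
  | TArrow A1 A2 =>
      exists l : seq (C * dist),
        dequiv d (lamsum l) /\ inS d /\
        forall v, interp A1 v ->
          exists w, steps (appsum l v) w /\ interp A2 w
  end.

Definition realizes (d : dist) (A : ty) : Prop :=
  exists w, steps d w /\ interp A w.

Definition tt : dist := DPure (TVal (Inl Star)).
Definition ff : dist := DPure (TVal (Inr Star)).

Definition is_tt_ff (d : dist) : Prop := dequiv d tt \/ dequiv d ff.

Definition piB (d : dist) : C * C :=
  (coef d (TVal (Inl Star)), coef d (TVal (Inr Star))).

Definition represents (d : dist) (F : C * C -> C * C) : Prop :=
  forall v, Span is_tt_ff v ->
    exists w, Span is_tt_ff w /\ steps (dapp d v) w /\ piB w = F (piB v).

Definition ip2 (u v : C * C) : C := u.1^* * v.1 + u.2^* * v.2.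

Definition linear2 (F : C * C -> C * C) : Prop :=
  forall (a : C) (u v : C * C),
    F (a * u.1 + v.1, a * u.2 + v.2) =
    (a * (F u).1 + (F v).1, a * (F u).2 + (F v).2).

Definition unitary2 (F : C * C -> C * C) : Prop :=
  linear2 F /\ forall u v, ip2 (F u) (F v) = ip2 u v.

From HB Require Import structures.
From mathcomp Require Import all_boot all_algebra.
From mathcomp Require Import boolp Rstruct complex.
From mathcomp Require Import ring.
Set Implicit Arguments.
Unset Strict Implicit.
Unset Printing Implicit Defensive.
Import GRing.Theory Num.Theory.
Local Open Scope ring_scope.

(* Atomic reduction is deterministic, so a pure term that reduces to a value
   distribution has a unique canonical result, and a distribution reduces to
   a value distribution exactly when each of its pure terms does, its result
   being the corresponding linear combination of theirs.  Applying
   [sum_i a_i . \x. t_i] to [a . tt + b . ff], either through the bilinear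
   application or through the bilinear substitution, therefore yields
   [a . r_tt + b . r_ff], where [r_tt] and [r_ff] are the results on [tt] and
   [ff]: the abstraction computes the linear map F of C^2 whose columns are
   the projections of [r_tt] and [r_ff].  Membership in [#B => #B] says that
   F maps unit vectors to unit vectors; for a linear map this is unitarity,
   by polarisation on e1, e2, (3/5, 4/5) and (3/5, 4i/5).  Conversely a
   unitary F keeps normalised Boolean arguments normalised. *)

(** * Canonical forms *)

(* A distribution up to [dequiv] is its support together with its
   coefficient function (lemma [dequiv_sem]). *)
Definition Sem := ((tm -> Prop) * (tm -> C))%type.

Definition sem (d : dist) : Sem := (occ d, coef d).

Definition szero : Sem := (fun _ => False, fun _ => 0).
Definition splus (X Y : Sem) : Sem :=
  (fun u => X.1 u \/ Y.1 u, fun u => X.2 u + Y.2 u).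
Definition sscal (c : C) (X : Sem) : Sem := (X.1, fun u => c * X.2 u).

Fixpoint comb (d : dist) (f : tm -> Sem) : Sem :=
  match d with
  | D0 => szero
  | DPure t => f t
  | DPlus a b => splus (comb a f) (comb b f)
  | DScal c a => sscal c (comb a f)
  end.

Lemma Sem_ext (X Y : Sem) :
  (forall u, X.1 u <-> Y.1 u) -> X.2 =1 Y.2 -> X = Y.
Proof.
case: X Y => [x1 x2] [y1 y2] /= E1 E2.
by congr pair; apply: funext => u; [apply: propext | apply: E2].
Qed.

Lemma dequiv_sem d1 d2 : dequiv d1 d2 <-> sem d1 = sem d2.
Proof.
split=> [E | [E1 E2] t]; last by rewrite E1 E2.
by apply: Sem_ext => u; [apply: (E u).1 | apply: (E u).2].
Qed.

Lemma dequiv_refl d : dequiv d d.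
Proof. by []. Qed.

Lemma dequiv_sym d1 d2 : dequiv d1 d2 -> dequiv d2 d1.
Proof. by move=> /dequiv_sem E; apply/dequiv_sem. Qed.

Lemma combo_ex d f u : (comb d f).1 u <-> exists t, occ d t /\ (f t).1 u.
Proof.
elim: d => [|s|a IHa b IHb|c a IHa] /=; last exact: IHa.
- by split=> // -[t []].
- by split=> [|[t [<-]]] //; exists s.
- rewrite IHa IHb; split=> [[] [t [Ht Hu]]|[t [[Ht|Ht] Hu]]].
  + by exists t; split=> //; left.
  + by exists t; split=> //; right.
  + by left; exists t.
  + by right; exists t.
Qed.

Lemma comb_ext d f g : (forall t, occ d t -> f t = g t) -> comb d f = comb d g.
Proof.
elim: d => [|s|a IHa b IHb|c a IHa] //= E; first exact: E.
- by rewrite IHa ?IHb // => t Ht; apply: E; by [left|right].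
- by rewrite IHa.
Qed.

Lemma comb_id d : comb d (fun t => sem (DPure t)) = sem d.
Proof. by elim: d => //= [a -> b ->|c a ->]. Qed.

Lemma comb_lin g d f : comb (lin g d) f = comb d (fun t => comb (g t) f).
Proof. by elim: d => //= [a -> b ->|c a ->]. Qed.

(* Classical decidable equality on pure terms, so that sums over lists of
   terms can use [bigop]; [t == s] unfolds to the [`[< t = s >]] of [coef]. *)
HB.instance Definition _ := gen_eqMixin tm.

Fixpoint occL (d : dist) : seq tm :=
  match d with
  | D0 => [::]
  | DPure t => [:: t]
  | DPlus a b => occL a ++ occL b
  | DScal _ a => occL a
  end.

Definition supp (d : dist) : seq tm := undup (occL d).

Lemma mem_supp d t : t \in supp d <-> occ d t.
Proof.
rewrite mem_undup; elim: d => [|s|a IHa b IHb|c a IHa] //=.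
- by rewrite inE; split=> [/eqP|<-].
- by rewrite mem_cat -IHa -IHb; split=> [/orP|[]->]; rewrite ?orbT.
Qed.

Lemma sum_coef_pure (U : seq tm) s (g : tm -> C) : uniq U -> s \in U ->
  \sum_(t <- U) coef (DPure s) t * g t = g s.
Proof.
move=> uU sU; rewrite (big_rem s) //= asboolT // mul1r big1_seq ?addr0 //.
move=> t /andP[_ tU]; rewrite asboolF ?mul0r // => st.
by move: tU; rewrite -st mem_rem_uniqF.
Qed.

Lemma combc_sum d f u (U : seq tm) : uniq U -> (forall t, occ d t -> t \in U) ->
  (comb d f).2 u = \sum_(t <- U) coef d t * (f t).2 u.
Proof.
move=> uU; elim: d => [|s|a IHa b IHb|c a IHa] dU.
- by rewrite big1 // => t _; rewrite mul0r.
- by rewrite sum_coef_pure //; apply: dU.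
- transitivity ((comb a f).2 u + (comb b f).2 u) => //.
  rewrite IHa ?IHb -?big_split => [|t Ht|t Ht]; try by apply: dU; by [left|right].
  by apply: eq_bigr => t _; rewrite mulrDl.
- transitivity (c * (comb a f).2 u) => //.
  by rewrite IHa // mulr_sumr; apply: eq_bigr => t _; rewrite mulrA.
Qed.

Lemma comb_dequiv d1 d2 f : dequiv d1 d2 -> comb d1 f = comb d2 f.
Proof.
move=> E; apply: Sem_ext => u.
  by rewrite !combo_ex; split=> -[t [/(E t).1 Ht Hu]]; exists t.
rewrite !(combc_sum f u (undup_uniq (occL d1))) => [|t /(E t).1.2 /mem_supp|t /mem_supp] //.
by apply: eq_bigr => t _; rewrite (E t).2.
Qed.

Lemma coef_dsum_pure (s : seq tm) (c : tm -> C) u :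
  coef (dsum [seq DScal (c t) (DPure t) | t <- s]) u =
  \sum_(t <- s) c t * coef (DPure t) u.
Proof. by elim: s => [|t s IH]; rewrite ?big_nil ?big_cons //= IH. Qed.

Lemma occ_dsum_pure (s : seq tm) (c : tm -> C) u :
  occ (dsum [seq DScal (c t) (DPure t) | t <- s]) u <-> u \in s.
Proof.
elim: s => [|t s IH] //=; rewrite inE IH.
by split=> [[->|->]|/orP[/eqP|]]; rewrite ?eqxx ?orbT //; [left | right].
Qed.

Lemma dequiv_canonical d :
  dequiv d (dsum [seq DScal (coef d t) (DPure t) | t <- supp d]).
Proof.
move=> u; split; first by rewrite occ_dsum_pure mem_supp.
rewrite coef_dsum_pure -(combc_sum (fun t => sem (DPure t)) u (undup_uniq _)).
  by rewrite comb_id.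
by move=> t /mem_supp.
Qed.

Lemma span_occ P d t : Span P d -> occ d t -> exists2 p, P p & occ p t.
Proof.
case=> l [Pl E] /(E t).1 {E}; elim: l Pl => //= p l IH Pl [Hp|Hl].
- by exists p.2 => //; apply: Pl; left.
- by apply: IH => // q Hq; apply: Pl; right.
Qed.

Lemma In_map_mem (T : eqType) U (f : T -> U) (s : seq T) y :
  List.In y (map f s) -> exists2 x, x \in s & y = f x.
Proof.
elim: s => //= x s IH [<-|/IH [x' Hx' ->]]; first by exists x; rewrite ?inE ?eqxx.
by exists x'; rewrite // inE Hx' orbT.
Qed.

Lemma span_support P d : (forall t, occ d t -> P (DPure t)) -> Span P d.
Proof.
move=> H; exists [seq (coef d t, DPure t) | t <- supp d]; split.
  by move=> p Hp; have [t /mem_supp /H Pt ->] := In_map_mem Hp.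
by rewrite -map_comp; apply: dequiv_canonical.
Qed.

(** * Reduction and evaluation *)

Lemma step_plusl a a' b : step a a' -> step (DPlus a b) (DPlus a' b).
Proof.
case=> c [s [s' [r [E1 [E2 Hs]]]]]; exists c, s, s', (DPlus r b).
split; [|split=> //] => t; [case: (E1 t) | case: (E2 t)] => /= O K;
  by split; [rewrite O; tauto | rewrite K addrA].
Qed.

Lemma step_plusr a b b' : step b b' -> step (DPlus a b) (DPlus a b').
Proof.
case=> c [s [s' [r [E1 [E2 Hs]]]]]; exists c, s, s', (DPlus a r).
split; [|split=> //] => t; [case: (E1 t) | case: (E2 t)] => /= O K;
  by split; [rewrite O; tauto | rewrite K /=; ring].
Qed.

Lemma step_scal c a a' : step a a' -> step (DScal c a) (DScal c a').
Proof.
case=> e [s [s' [r [E1 [E2 Hs]]]]]; exists (c * e), s, s', (DScal c r).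
split; [|split=> //] => t; [case: (E1 t) | case: (E2 t)] => /= O K;
  by split; [rewrite O | rewrite K /=; ring].
Qed.

Lemma step_ared s s' : ared s s' -> step (DPure s) s'.
Proof.
have unit d t : occ d t <-> occ (DPlus (DScal 1 d) D0) t by rewrite /=; tauto.
move=> Hs; exists 1, s, s', D0; split; last split=> // t;
  by split; [apply: unit | rewrite /= mul1r addr0].
Qed.

Lemma steps_trans d1 d2 d3 : steps d1 d2 -> steps d2 d3 -> steps d1 d3.
Proof. by elim=> // x y z Hxy _ IH /IH; apply: steps_step. Qed.

Lemma steps_plusl a a' b : steps a a' -> steps (DPlus a b) (DPlus a' b).
Proof. by elim=> [x|x y z /step_plusl H _]; [constructor | apply: steps_step]. Qed.

Lemma steps_plusr a b b' : steps b b' -> steps (DPlus a b) (DPlus a b').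
Proof. by elim=> [x|x y z /step_plusr H _]; [constructor | apply: steps_step]. Qed.

Lemma steps_scal c a a' : steps a a' -> steps (DScal c a) (DScal c a').
Proof. by elim=> [x|x y z /step_scal H _]; [constructor | apply: steps_step]. Qed.

Lemma steps_comb d f :
  (forall t, occ d t -> exists w, steps (DPure t) w /\ valdist w /\ sem w = f t) ->
  exists w, steps d w /\ valdist w /\ sem w = comb d f.
Proof.
elim: d => [|s|a IHa b IHb|c a IHa] /= H.
- by exists D0; split; [apply: steps_refl | split].
- exact: H.
- have [wa [Sa [Va <-]]] := IHa (fun t Ht => H t (or_introl Ht)).
  have [wb [Sb [Vb <-]]] := IHb (fun t Ht => H t (or_intror Ht)).
  exists (DPlus wa wb); split; last by split=> // t /= [/Va|/Vb].
  exact: steps_trans (steps_plusl _ Sa) (steps_plusr _ Sb).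
- have [wa [Sa [Va <-]]] := IHa H.
  by exists (DScal c wa); split; [apply: steps_scal | split].
Qed.

Lemma ared_val v d : ~ ared (TVal v) d.
Proof. by move=> H; inversion H. Qed.

Lemma ared_det s d1 d2 : ared s d1 -> ared s d2 -> d1 = d2.
Proof.
move=> H; elim: H d2 => [body v|s0|v1 v2 s0|v s1 s2|v s1 s2
  |s0 t t' Ht IH|s0 s' v Hs IH|t t' s0 Ht IH|t t' s0 Ht IH|t t' s1 s2 Ht IH] d2 H2;
  inversion H2; subst; try reflexivity;
  try (exfalso; by apply: ared_val; eassumption).
all: match goal with Hy : ared _ _ |- _ => by rewrite (IH _ Hy) end.
Qed.

(* [evals t X]: the pure term [t] reduces to a value distribution whose
   canonical form is [X]. *)
Inductive evals : tm -> Sem -> Prop :=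
  | evals_val v : evals (TVal v) (sem (DPure (TVal v)))
  | evals_red s s' f : ared s s' -> (forall t, occ s' t -> evals t (f t)) ->
      evals s (comb s' f).

Lemma evals_det t X Y : evals t X -> evals t Y -> X = Y.
Proof.
move=> H; elim: H Y => [v|s s' f Hs _ IH] Y HY;
  inversion HY as [v'|s0 s'' g Hs' Hg]; subst;
  try by [|case: (ared_val Hs)|case: (ared_val Hs')].
have E := ared_det Hs Hs'; subst.
by apply: comb_ext => u Hu; apply: IH (Hg u Hu).
Qed.

Definition eval (t : tm) : Sem :=
  if pselect (exists X, evals t X) is left H then projT1 (cid H) else szero.

Lemma eval_spec t X : evals t X -> eval t = X.
Proof.
move=> H; rewrite /eval; case: pselect => [H'|[]]; last by exists X.
by case: (cid H') => Y /= /evals_det; apply.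
Qed.

Lemma evalP t : (exists X, evals t X) -> evals t (eval t).
Proof. by case=> X H; rewrite (eval_spec H). Qed.

Definition evaluable (d : dist) : Prop := forall t, occ d t -> exists X, evals t X.

Lemma evals_steps t X : evals t X ->
  exists w, steps (DPure t) w /\ valdist w /\ sem w = X.
Proof.
elim=> [v|s s' f Hs _ IH].
  by exists (DPure (TVal v)); split; [apply: steps_refl | split=> // u /= <-].
have [w [Sw [Vw Ew]]] := steps_comb IH.
by exists w; split=> //; apply: steps_step (step_ared Hs) Sw.
Qed.

Lemma evaluable_steps d : evaluable d ->
  exists w, steps d w /\ valdist w /\ sem w = comb d eval.
Proof. by move=> H; apply: steps_comb => t /H /evalP /evals_steps. Qed.

Lemma steps_value_eval d w : steps d w -> valdist w ->
  evaluable d /\ comb d eval = sem w.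
Proof.
elim=> [{}d|d1 d2 d3 [a [s [s' [r [E1 [E2 Hs]]]]]] _ IH] Vw.
  have ev t : occ d t -> evals t (sem (DPure t)).
    by move=> /Vw; case: t => // v _; constructor.
  split=> [t /ev|]; first by exists (sem (DPure t)).
  by rewrite -comb_id; apply: comb_ext => t /ev /eval_spec.
have [ev2 E] := IH Vw.
have ev2' t : occ s' t \/ occ r t -> exists X, evals t X.
  by move=> Ht; apply: ev2; apply: (E2 t).1.2.
have evs : evals s (comb s' eval).
  by apply: evals_red => // t Ht; apply/evalP/ev2'; left.
split=> [t /(E1 t).1 /= [<-|Ht]|]; first by exists (comb s' eval).
  by apply: ev2'; right.
by rewrite (comb_dequiv _ E1) -E (comb_dequiv _ E2) /= (eval_spec evs).
Qed.

(** * Abstractions applied to value distributions *)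

Definition beta_sem (t s : tm) : Sem :=
  match t, s with
  | TVal (Lam b), TVal x => comb (substd 0 x b) eval
  | _, _ => szero
  end.

Definition app_sem (L v : dist) : Sem := comb L (fun t => comb v (beta_sem t)).

Definition all_lams (L : dist) : Prop :=
  forall t, occ L t -> exists b, t = TVal (Lam b).

Definition beta_evaluable (L v : dist) : Prop :=
  forall b x, occ L (TVal (Lam b)) -> occ v (TVal x) -> evaluable (substd 0 x b).

Lemma all_lams_lamsum l : all_lams (lamsum l).
Proof. by elim: l => //= p l IH t [<-|/IH]; first by exists p.2. Qed.

Lemma beta_evaluable_dequiv L L' v :
  dequiv L L' -> beta_evaluable L v -> beta_evaluable L' v.
Proof. by move=> E ev b x /(E _).1.2; apply: ev. Qed.

Lemma occ_lin g d u : occ (lin g d) u <-> exists t, occ d t /\ occ (g t) u.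
Proof.
elim: d => [|s|a IHa b IHb|c a IHa] /=; last exact: IHa.
- by split=> // -[t []].
- by split=> [|[t [<-]]] //; exists s.
- rewrite IHa IHb; split=> [[] [t [Ht Hu]]|[t [[Ht|Ht] Hu]]].
  + by exists t; split=> //; left.
  + by exists t; split=> //; right.
  + by left; exists t.
  + by right; exists t.
Qed.

Lemma occ_dapp L v u :
  occ (dapp L v) u <-> exists t s, [/\ occ L t, occ v s & u = App t s].
Proof.
rewrite occ_lin; split=> [[t [Ht /occ_lin [s [Hs /= <-]]]]|[t [s [Ht Hs ->]]]].
  by exists t, s.
by exists t; split=> //; apply/occ_lin; exists s.
Qed.

Lemma occ_appsum l v u : occ (appsum l v) u <->
  exists b x, [/\ occ (lamsum l) (TVal (Lam b)), occ v (TVal x) & occ (substd 0 x b) u].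
Proof.
elim: l => [|p l IH] /=; first by split=> // -[b [x []]].
rewrite IH occ_lin.
split=> [[[t [Ht Hu]]|[b [x [Hb Hx Hu]]]]|[b [x [[Eb|Hb] Hx Hu]]]].
- by case: t Ht Hu => // x Hx Hu; exists p.2, x; split=> //; left.
- by exists b, x; split=> //; right.
- by left; case: Eb => ->; exists (TVal x).
- by right; exists b, x.
Qed.

Lemma comb_appsum l v : comb (appsum l v) eval = app_sem (lamsum l) v.
Proof.
elim: l => //= p l IH; rewrite IH /bsubst /vlin comb_lin.
by congr (splus (sscal _ _) _); apply: comb_ext => -[].
Qed.

Lemma beta_evaluable_appsum l v :
  beta_evaluable (lamsum l) v <-> evaluable (appsum l v).
Proof.
split=> [ev u /occ_appsum [b [x [Hb Hx Hu]]] | ev b x Hb Hx u Hu].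
  exact: ev Hb Hx u Hu.
by apply: ev; apply/occ_appsum; exists b, x.
Qed.

Lemma evals_beta b x : evaluable (substd 0 x b) ->
  evals (App (TVal (Lam b)) (TVal x)) (comb (substd 0 x b) eval).
Proof. by move=> ev; apply: evals_red => [|t /ev /evalP]; first constructor. Qed.

Lemma evals_beta_inv b x X :
  evals (App (TVal (Lam b)) (TVal x)) X -> evaluable (substd 0 x b).
Proof.
move=> H; inversion H as [|s s' f Hred Hf]; subst.
have E := ared_det Hred (ared_beta b x); subst.
by move=> t /Hf Ht; exists (f t).
Qed.

Section Application.

Variables L v : dist.
Hypotheses (L_lams : all_lams L) (v_val : valdist v).

Lemma beta_evaluable_dapp : beta_evaluable L v <-> evaluable (dapp L v).
Proof.
split=> [ev u /occ_dapp [t [s [Ht Hs ->]]] | ev b x Hb Hx].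
  have [b Eb] := L_lams Ht; subst t; move: Hs (v_val Hs); case: s => // x Hs _.
  by eexists; apply: evals_beta; apply: ev Ht Hs.
have /ev [X /evals_beta_inv //] : occ (dapp L v) (App (TVal (Lam b)) (TVal x)).
by apply/occ_dapp; exists (TVal (Lam b)), (TVal x).
Qed.

Lemma comb_dapp : beta_evaluable L v -> comb (dapp L v) eval = app_sem L v.
Proof.
move=> ev; rewrite /dapp comb_lin; apply: comb_ext => t Ht.
rewrite comb_lin; apply: comb_ext => s Hs /=.
have [b Eb] := L_lams Ht; subst t; move: Hs (v_val Hs); case: s => // x Hs _.
by apply: eval_spec; apply: evals_beta; apply: ev Ht Hs.
Qed.

Lemma dapp_steps_app_sem : beta_evaluable L v ->
  exists w, steps (dapp L v) w /\ valdist w /\ sem w = app_sem L v.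
Proof. by move=> ev; rewrite -comb_dapp //; apply/evaluable_steps/beta_evaluable_dapp. Qed.

Lemma app_sem_dapp_steps w : steps (dapp L v) w -> valdist w ->
  beta_evaluable L v /\ sem w = app_sem L v.
Proof.
move=> S Vw; have [/beta_evaluable_dapp ev E] := steps_value_eval S Vw.
by split=> //; rewrite -E comb_dapp.
Qed.

End Application.

Lemma appsum_steps_app_sem l v : beta_evaluable (lamsum l) v ->
  exists w, steps (appsum l v) w /\ valdist w /\ sem w = app_sem (lamsum l) v.
Proof. by move=> /beta_evaluable_appsum /evaluable_steps; rewrite comb_appsum. Qed.

Lemma app_sem_appsum_steps l v w : steps (appsum l v) w -> valdist w ->
  beta_evaluable (lamsum l) v /\ sem w = app_sem (lamsum l) v.
Proof.
move=> S Vw; have [ev E] := steps_value_eval S Vw.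
by split; [apply/beta_evaluable_appsum | rewrite -E comb_appsum].
Qed.

(** * Boolean distributions *)

Definition uT : tm := TVal (Inl Star).
Definition uF : tm := TVal (Inr Star).

Definition bool_supp (d : dist) : Prop := forall t, occ d t -> t = uT \/ t = uF.

Lemma bool_supp_valdist d : bool_supp d -> valdist d.
Proof. by move=> H t /H [->|->]. Qed.

Lemma closedd_occ k d : (forall t, occ d t -> closedt k t) -> closedd k d.
Proof.
elim: d => [|s|a IHa b IHb|c a IHa] //= H; first exact: H.
by rewrite IHa ?IHb // => t Ht; apply: H; by [left|right].
Qed.

Lemma bool_supp_closed d : bool_supp d -> closedd 0 d.
Proof. by move=> H; apply: closedd_occ => t /H [->|->]. Qed.

Lemma span_ttffP d : Span is_tt_ff d <-> bool_supp d.
Proof.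
split=> [Sd t /(span_occ Sd) [p [] E /(E t).1 <-] | Bd]; [by left | by right |].
by apply: span_support => t /Bd [->|->]; [left | right].
Qed.

Lemma interp_B_supp p : interp TB p -> bool_supp p.
Proof.
by case=> -[v [Hv E]] t /(E t).1 /occ_lin [s [/(Hv s).1 /= <- /= <-]]; [left|right].
Qed.

Lemma inner_bool_supp w d : bool_supp w ->
  inner w d = (coef w uT)^* * coef d uT + (coef w uF)^* * coef d uF.
Proof.
elim: w => [|s|a IHa b IHb|c a IHa] /= H.
- by rewrite conjC0 !mul0r addr0.
- case: (H s) => //= ->; rewrite !(asboolT (erefl _)) asboolF // conjC1 conjC0;
    by rewrite mul1r mul0r ?addr0 ?add0r.
- rewrite IHa ?IHb => [|t Ht|t Ht]; try by apply: H; by [left|right].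
  by rewrite !rmorphD; ring.
- by rewrite IHa // !rmorphM; ring.
Qed.

Lemma interp_sharpBP v :
  interp (TSharp TB) v <-> bool_supp v /\ ip2 (piB v) (piB v) = 1.
Proof.
have inner_ip2 w : bool_supp w -> inner w w = ip2 (piB w) (piB w).
  by move=> /inner_bool_supp ->.
split=> [[Sv [_ [_ N]]] | [Bv N]].
  have Bv : bool_supp v by move=> t /(span_occ Sv) [p /interp_B_supp Bp /Bp].
  by rewrite -inner_ip2.
split; first by apply: span_support => t /Bv [->|->]; [left | right];
  exists (DPure (TVal Star)).
by split; [apply: bool_supp_valdist | split; [apply: bool_supp_closed | rewrite inner_ip2]].
Qed.

Lemma interp_sharpB_sem v w :
  sem v = sem w -> interp (TSharp TB) v -> interp (TSharp TB) w.
Proof.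
move=> [Eo Ec] /interp_sharpBP [Bv N]; apply/interp_sharpBP.
by rewrite /piB -Ec; split=> // t; rewrite -Eo; apply: Bv.
Qed.

Definition bvec (x : C * C) : dist := DPlus (DScal x.1 tt) (DScal x.2 ff).

Lemma bool_supp_bvec x : bool_supp (bvec x).
Proof. by move=> t /= [] <-; [left|right]. Qed.

Lemma piB_bvec x : piB (bvec x) = x.
Proof.
case: x => a b; rewrite /piB /= !(asboolT (erefl _)) !asboolF //.
by rewrite !mulr1 !mulr0 addr0 add0r.
Qed.

Lemma interp_sharpB_bvec x : ip2 x x = 1 -> interp (TSharp TB) (bvec x).
Proof. by move=> Nx; apply/interp_sharpBP; rewrite piB_bvec; split=> //; apply: bool_supp_bvec. Qed.

Lemma interp_sharpB_tt : interp (TSharp TB) tt.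
Proof.
apply/interp_sharpBP; split=> [t /= <-|]; first by left.
by rewrite /piB /ip2 /= (asboolT (erefl _)) asboolF // conjC1 conjC0 mulr1 mulr0 addr0.
Qed.

Lemma interp_sharpB_ff : interp (TSharp TB) ff.
Proof.
apply/interp_sharpBP; split=> [t /= <-|]; first by right.
by rewrite /piB /ip2 /= (asboolT (erefl _)) asboolF // conjC1 conjC0 mulr1 mulr0 add0r.
Qed.

Lemma combc_linear d g g1 g2 x y u :
  (forall t, (g t).2 u = x * (g1 t).2 u + y * (g2 t).2 u) ->
  (comb d g).2 u = x * (comb d g1).2 u + y * (comb d g2).2 u.
Proof.
move=> H; elim: d => [|s|a IHa b IHb|c a IHa].
- by rewrite /= !mulr0 addr0.
- exact: H.
- transitivity ((comb a g).2 u + (comb b g).2 u) => //.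
  by rewrite IHa IHb /=; ring.
- transitivity (c * (comb a g).2 u) => //.
  by rewrite IHa /=; ring.
Qed.

Lemma combc_bool_supp v f u : bool_supp v ->
  (comb v f).2 u = coef v uT * (f uT).2 u + coef v uF * (f uF).2 u.
Proof.
move=> Bv; have uU : uniq [:: uT; uF] by rewrite /= inE andbT; apply/eqP.
have cover s : occ v s -> s \in [:: uT; uF].
  by move=> /Bv [->|->]; rewrite !inE eqxx ?orbT.
by rewrite (combc_sum f u uU cover) !big_cons big_nil addr0.
Qed.

Lemma coef_app_sem_bool L v u : bool_supp v ->
  (app_sem L v).2 u = coef v uT * (app_sem L tt).2 u + coef v uF * (app_sem L ff).2 u.
Proof. by move=> Bv; apply: combc_linear => t; apply: combc_bool_supp. Qed.

Lemma occ_app_sem_bool L v u : bool_supp v ->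
  (app_sem L v).1 u -> (app_sem L tt).1 u \/ (app_sem L ff).1 u.
Proof.
move=> Bv /combo_ex [t [Ht /combo_ex [s [/Bv [] -> Hu]]]];
  [left | right]; apply/combo_ex; by exists t.
Qed.

(** * Unitary maps of C^2 *)

Definition mx2 (a b u : C * C) : C * C :=
  (u.1 * a.1 + u.2 * b.1, u.1 * a.2 + u.2 * b.2).

Lemma app_sem_bool_response L v w wT wF :
  sem wT = app_sem L tt -> sem wF = app_sem L ff ->
  bool_supp wT -> bool_supp wF -> bool_supp v -> sem w = app_sem L v ->
  bool_supp w /\ piB w = mx2 (piB wT) (piB wF) (piB v).
Proof.
move=> ET EF BT BF Bv Ew.
have coef_w u : coef w u = coef v uT * coef wT u + coef v uF * coef wF u.
  by rewrite -[coef w]/((sem w).2) Ew coef_app_sem_bool // -ET -EF.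
split; last by rewrite /piB /mx2 /= !coef_w.
move=> u Hu; have /(occ_app_sem_bool Bv) : (app_sem L v).1 u by rewrite -Ew.
by rewrite -ET -EF => -[/BT|/BF].
Qed.

Lemma ip2C a b : ip2 b a = (ip2 a b)^*.
Proof. by rewrite /ip2 rmorphD !rmorphM /= !conjCK; ring. Qed.

Lemma ip2_mx2 a b u v : ip2 (mx2 a b u) (mx2 a b v) =
  u.1^* * v.1 * ip2 a a + u.2^* * v.2 * ip2 b b +
  u.1^* * v.2 * ip2 a b + u.2^* * v.1 * ip2 b a.
Proof. by rewrite /ip2 /mx2 /= !rmorphD !rmorphM /=; ring. Qed.

Lemma mx2_orthonormal a b (c s : C) :
  c^* = c -> s^* = s -> c * s != 0 -> c * c + s * s = 1 ->
  (forall x, ip2 x x = 1 -> ip2 (mx2 a b x) (mx2 a b x) = 1) ->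
  [/\ ip2 a a = 1, ip2 b b = 1 & ip2 a b = 0].
Proof.
move=> Rc Rs cs0 cs1 unit.
have e1 : ip2 (1, 0) (1, 0) = 1 by rewrite /ip2 /= conjC1 mulr1 mulr0 addr0.
have e2 : ip2 (0, 1) (0, 1) = 1 by rewrite /ip2 /= conjC1 mulr1 mulr0 add0r.
have ucs : ip2 (c, s) (c, s) = 1 by rewrite /ip2 /= Rc Rs.
have ucsi : ip2 (c, s * 'i) (c, s * 'i) = 1.
  rewrite /ip2 /= rmorphM /= Rc Rs conjCi -cs1.
  by transitivity (c * c + s * s * - 'i ^+ 2); [ring | rewrite sqrCi opprK mulr1].
have Na : ip2 a a = 1.
  by move: (unit _ e1); rewrite ip2_mx2 /= conjC1 conjC0 !(mul0r, mulr0, mul1r, addr0).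
have Nb : ip2 b b = 1.
  by move: (unit _ e2); rewrite ip2_mx2 /= conjC1 conjC0 !(mul0r, mulr0, mul1r, add0r, addr0).
split=> //; move: (unit _ ucs) (unit _ ucsi).
rewrite !ip2_mx2 /= rmorphM /= Rc Rs conjCi Na Nb [ip2 b a]ip2C.
set z := ip2 a b => E1 E2.
(* The two norms are [1 + 2 c s Re z] and [1 - 2 c s Im z]. *)
have re0 : c * s * (z + z^*) = 0.
  transitivity ((c * c * 1 + s * s * 1 + c * s * z + s * c * z^*) - (c * c + s * s)).
    by ring.
  by rewrite E1 cs1 subrr.
have im0 : c * s * 'i * (z - z^*) = 0.
  transitivity ((c * c * 1 + s * - 'i * (s * 'i) * 1 + c * (s * 'i) * z
    + s * - 'i * c * z^*) - (c * c + s * s * - 'i ^+ 2)); first by ring.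
  by rewrite E2 sqrCi opprK mulr1 cs1 subrr.
have {}re0 : z + z^* = 0 by apply: (mulfI cs0); rewrite mulr0.
have {}im0 : z - z^* = 0 by apply: (mulfI (mulf_neq0 cs0 (@neq0Ci C))); rewrite mulr0.
have : z *+ 2 = (z + z^*) + (z - z^*) by rewrite mulr2n; ring.
by rewrite re0 im0 addr0 => /eqP; rewrite mulrn_eq0 => /eqP.
Qed.

Lemma mx2_unitary a b :
  (forall x, ip2 x x = 1 -> ip2 (mx2 a b x) (mx2 a b x) = 1) -> unitary2 (mx2 a b).
Proof.
move=> unit; split=> [c u v|]; first by rewrite /mx2 /=; congr pair; ring.
(* A unit vector with rational, nonzero coordinates: no square roots needed. *)
pose c : C := 3%:R / 5%:R; pose s : C := 4%:R / 5%:R.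
have Rc : c^* = c by rewrite rmorphM fmorphV /= !conjC_nat.
have Rs : s^* = s by rewrite rmorphM fmorphV /= !conjC_nat.
have cs1 : c * c + s * s = 1 by rewrite /c /s; field.
have cs0 : c * s != 0 by rewrite !mulf_neq0 ?invr_eq0 ?pnatr_eq0.
have [Na Nb Oab] := mx2_orthonormal Rc Rs cs0 cs1 unit.
move=> u v; rewrite ip2_mx2 Na Nb [ip2 b a]ip2C Oab conjC0 /ip2; ring.
Qed.

(** * The type [#B => #B] *)

Definition maps_sharpB (L : dist) : Prop :=
  forall v, interp (TSharp TB) v ->
    beta_evaluable L v /\ exists2 w, interp (TSharp TB) w & sem w = app_sem L v.

Lemma arrow_sharpB_iff l : inS (lamsum l) ->
  interp (TArrow (TSharp TB) (TSharp TB)) (lamsum l) <-> maps_sharpB (lamsum l).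
Proof.
move=> HS; split=> [[l0 [E [_ Harr]]] v Hv | M].
  have [w [S Hw]] := Harr v Hv.
  have Vw := bool_supp_valdist ((interp_sharpBP w).1 Hw).1.
  have [ev Ew] := app_sem_appsum_steps S Vw.
  split; first exact: beta_evaluable_dequiv (dequiv_sym E) ev.
  by exists w => //; rewrite Ew /app_sem (comb_dequiv _ E).
exists l; split; [exact: dequiv_refl | split=> // v Hv].
have [ev [w Hw Ew]] := M v Hv.
have [w' [S [_ Ew']]] := appsum_steps_app_sem ev.
by exists w'; split=> //; apply: interp_sharpB_sem Hw; rewrite Ew'.
Qed.

Lemma represents_maps_sharpB L F :
  all_lams L -> unitary2 F -> represents L F -> maps_sharpB L.
Proof.
move=> HL [_ Fip] rep v /interp_sharpBP [Bv Nv].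
have [w [/span_ttffP Bw [S Ew]]] := rep v ((span_ttffP v).2 Bv).
have [ev Esem] := app_sem_dapp_steps HL (bool_supp_valdist Bv) S (bool_supp_valdist Bw).
by split=> //; exists w => //; apply/interp_sharpBP; rewrite Ew Fip.
Qed.

Lemma maps_sharpB_represents L :
  all_lams L -> maps_sharpB L -> exists F, unitary2 F /\ represents L F.
Proof.
move=> HL M.
have [evT [wT /interp_sharpBP [BT _] ET]] := M tt interp_sharpB_tt.
have [evF [wF /interp_sharpBP [BF _] EF]] := M ff interp_sharpB_ff.
pose F := mx2 (piB wT) (piB wF).
have respond v w : bool_supp v -> sem w = app_sem L v ->
    bool_supp w /\ piB w = F (piB v) := app_sem_bool_response ET EF BT BF.
exists F; split.
  apply: mx2_unitary => x Nx.
  have [_ [w /interp_sharpBP [_ Nw] Ew]] := M (bvec x) (interp_sharpB_bvec Nx).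
  have [_ Pw] := respond _ _ (@bool_supp_bvec x) Ew.
  by move: Nw; rewrite Pw piB_bvec.
move=> v /span_ttffP Bv.
have ev : beta_evaluable L v.
  by move=> b x Hb /Bv [E|E]; [apply: evT Hb _ | apply: evF Hb _]; rewrite E.
have [w [S [_ Ew]]] := dapp_steps_app_sem HL (bool_supp_valdist Bv) ev.
have [Bw Pw] := respond v w Bv Ew.
by exists w; split; [apply/span_ttffP | split].
Qed.

Theorem mainTheorem2 (l : seq (C * dist)) :
  (forall p, List.In p l -> closedv 0 (Lam p.2)) ->
  inS (lamsum l) ->
  (interp (TArrow (TSharp TB) (TSharp TB)) (lamsum l) <->
   exists F : C * C -> C * C, unitary2 F /\ represents (lamsum l) F).
Proof.
(* Closedness of the abstractions already follows from [inS (lamsum l)]. *)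
move=> _ HS; rewrite arrow_sharpB_iff //; split.
  exact: maps_sharpB_represents (@all_lams_lamsum l).
by case=> F [UF RF]; apply: represents_maps_sharpB (@all_lams_lamsum l) UF RF.
Qed.
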